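(* Let $\alpha\in(0,1)$, $R>0$, $m=\sqrt{1-\alpha^2}/\alpha$, and consider the initial state $(x_O,y_O,y_T)$ at time $0$. Let $D=\{(x,y):(x-x_O)^2+(y-y_O)^2\le R^2\}$ be the observation disk and $\mathrm{DL}=\{(\pm s\alpha,\,y_T+s\sqrt{1-\alpha^2}):s\ge0\}$ the Decision Line. If $D$ lies beneath the Decision Line, i.e. $D\subseteq\{(x,y):y-y_T\le m|x|\}$, and $D\cap\mathrm{DL}$ contains at most one point, then the optimal observation time is $0$ (the state belongs to $\mathscr B_1$).
   Context: Target: position $(0,y_T(t))$, $\dot y_T=1$, $y_T(0)=y_T$. Observer: position $(x_O(t),y_O(t))$ starting at $(x_O,y_O)$, $\dot x_O=\alpha\cos\psi(t)$, $\dot y_O=\alpha\sin\psi(t)$, heading $\psi:[0,\infty)\to\mathbb R$ a measurable control. For a control, $t_2=\inf\{t\ge0:x_O(t)^2+(y_O(t)-y_T(t))^2\le R^2\}$, $t_f=\inf\{t\ge t_2:x_O(t)^2+(y_O(t)-y_T(t))^2>R^2\}$, and $t_{\text{obs}}=t_f-t_2$ (taken to be $0$ if no contact occurs). The optimal observation time is the supremum of $t_{\text{obs}}$ over all controls. The Decision Line is the set of points $Z$ whose Apollonius circle $\{P:|PZ|=\alpha|PT|\}$ with the initial target position $T=(0,y_T)$ is tangent to the target's path $\{(0,y):y\ge y_T\}$, which is the union of the two rays given. $\mathscr B_1$ denotes the set of states with optimal observation time $0$. *)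

From HB Require Import structures.
From mathcomp Require Import all_boot all_order all_algebra.
From mathcomp Require Import all_classical all_reals all_analysis.
Set Implicit Arguments. Unset Strict Implicit. Unset Printing Implicit Defensive.
Import Order.TTheory GRing.Theory Num.Theory.
Import numFieldNormedType.Exports.
Local Open Scope classical_set_scope.
Local Open Scope ring_scope.

Section Game.
Variable R : realType.

Definition admissible (psi : R -> R) : Prop :=
  measurable_fun (`[0%R, +oo[ : set R) psi.

Definition obs_x (alpha xO : R) (psi : R -> R) (t : R) : R :=
  xO + Rintegral lebesgue_measure `[0%R, t] (fun s => alpha * cos (psi s)).
Definition obs_y (alpha yO : R) (psi : R -> R) (t : R) : R :=
  yO + Rintegral lebesgue_measure `[0%R, t] (fun s => alpha * sin (psi s)).

(* Target position: (0, yT + t). *)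
Definition targ_y (yT t : R) : R := yT + t.

Definition dist2 (alpha xO yO yT : R) (psi : R -> R) (t : R) : R :=
  (obs_x alpha xO psi t) ^+ 2 + (obs_y alpha yO psi t - targ_y yT t) ^+ 2.

Definition t2 (alpha r xO yO yT : R) (psi : R -> R) : \bar R :=
  ereal_inf [set (t%:E)%E | t in [set t : R | 0 <= t /\ dist2 alpha xO yO yT psi t <= r ^+ 2]].

Definition tf (alpha r xO yO yT : R) (psi : R -> R) : \bar R :=
  ereal_inf [set (t%:E)%E | t in [set t : R |
     (t2 alpha r xO yO yT psi <= t%:E)%E /\ r ^+ 2 < dist2 alpha xO yO yT psi t]].

Definition tobs (alpha r xO yO yT : R) (psi : R -> R) : \bar R :=
  if (t2 alpha r xO yO yT psi == +oo)%E then 0%E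
  else (tf alpha r xO yO yT psi - t2 alpha r xO yO yT psi)%E.

Definition optimal_obs_time (alpha r xO yO yT : R) : \bar R :=
  ereal_sup [set tobs alpha r xO yO yT psi | psi in admissible].

Definition obs_disk (r xO yO : R) : set (R * R) :=
  [set p | (p.1 - xO) ^+ 2 + (p.2 - yO) ^+ 2 <= r ^+ 2].

Definition decision_line (alpha yT : R) : set (R * R) :=
  [set p | exists s : R, 0 <= s /\
     (p = (s * alpha, yT + s * Num.sqrt (1 - alpha ^+ 2)) \/
      p = (- (s * alpha), yT + s * Num.sqrt (1 - alpha ^+ 2)))].

Definition below_DL (alpha yT : R) : set (R * R) :=
  [set p | p.2 - yT <= (Num.sqrt (1 - alpha ^+ 2) / alpha) * `|p.1|].

End Game.

(* Under the speed bound, after time t the observer has moved by a vector of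
   length at most alpha t.  The observer sees the target at time t iff the
   target's position (0, yT + t) minus this displacement lies in the disk D.
   That point is within alpha t of (0, yT + t); if it is also beneath the
   Decision Line, an Apollonius-circle computation forces it onto the Decision
   Line at height yT + (1 - alpha^2) t.  So distinct contact times would give
   distinct points of D on the Decision Line: contact happens at a single
   instant at most, and the observation time is 0 for every control. *)

From mathcomp Require Import all_boot all_order all_algebra.
From mathcomp Require Import all_classical all_reals all_analysis.
From mathcomp Require Import ring lra.
Set Implicit Arguments.
Unset Strict Implicit.
Unset Printing Implicit Defensive.

Import Order.TTheory GRing.Theory Num.Theory.
Import numFieldNormedType.Exports.
Local Open Scope classical_set_scope.
Local Open Scope ring_scope.

Section speed_bound.
Context {d : measure_display} {T : measurableType d} {R : realType}.
Variables (mu : {measure set T -> \bar R}) (D : set T).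
Hypotheses (mD : measurable D) (muD_fin : (mu D < +oo)%E).

Let integrable_bounded (h : T -> R) (K : R) :
  measurable_fun D h -> (forall x, D x -> `|h x| <= K) ->
  mu.-integrable D (EFin \o h).
Proof.
move=> mh hK; apply: measurable_bounded_integrable => //.
exists K; split; first exact: num_real.
by move=> M KM x Dx; apply: le_trans (hK x Dx) (ltW KM).
Qed.

Lemma Rintegral_sqr_norm_le (f g : T -> R) (M : R) :
  measurable_fun D f -> measurable_fun D g -> 0 <= M ->
  (forall x, D x -> f x ^+ 2 + g x ^+ 2 <= M ^+ 2) ->
  (\int[mu]_(x in D) f x) ^+ 2 + (\int[mu]_(x in D) g x) ^+ 2
    <= (M * fine (mu D)) ^+ 2.
Proof.
move=> mf mg M0 fgM.
have bound_le (h : T -> R) : (forall x, D x -> h x ^+ 2 <= M ^+ 2) ->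
    forall x, D x -> `|h x| <= M.
  move=> hM x Dx; rewrite -(ger0_norm M0) -ler_sqr ?normr_ge0 //.
  by rewrite !real_normK ?num_real ?hM.
have intf : mu.-integrable D (EFin \o f).
  apply: (@integrable_bounded f M mf); apply: bound_le => x Dx.
  by have := fgM x Dx; have := sqr_ge0 (g x); lra.
have intg : mu.-integrable D (EFin \o g).
  apply: (@integrable_bounded g M mg); apply: bound_le => x Dx.
  by have := fgM x Dx; have := sqr_ge0 (f x); lra.
set A := \int[mu]_(x in D) f x; set B := \int[mu]_(x in D) g x.
set N := Num.sqrt (A ^+ 2 + B ^+ 2).
have N0 : 0 <= N by exact: sqrtr_ge0.
have NN : N ^+ 2 = A ^+ 2 + B ^+ 2 by rewrite sqr_sqrtr // addr_ge0 ?sqr_ge0.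
have intZ (k : R) (h : T -> R) : mu.-integrable D (EFin \o h) ->
    mu.-integrable D (EFin \o (fun x => k * h x)).
  exact: integrableZl.
have intAB : mu.-integrable D (EFin \o (fun x => A * f x + B * g x)).
  exact: (integrableD mD (intZ A f intf) (intZ B g intg)).
have intNM : mu.-integrable D (EFin \o (fun=> N * M)).
  by apply: (@integrable_bounded _ `|N * M|) => //; exact: measurable_cst.
have sqrAB : A ^+ 2 + B ^+ 2 = \int[mu]_(x in D) (A * f x + B * g x).
  by rewrite RintegralD ?RintegralZl //; exact: intZ.
have cauchy_schwarz x : D x -> A * f x + B * g x <= N * M.
  move=> Dx; set X := A * f x + B * g x.
  have lagrange : X ^+ 2 + (A * g x - B * f x) ^+ 2
                  = (A ^+ 2 + B ^+ 2) * (f x ^+ 2 + g x ^+ 2) by rewrite /X; ring.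
  have XNM : X ^+ 2 <= (N * M) ^+ 2.
    rewrite exprMn NN; have := sqr_ge0 (A * g x - B * f x).
    have := ler_wpM2l (sqr_ge0 N) (fgM x Dx); rewrite NN; lra.
  have := mulr_ge0 N0 M0; nra.
have : A ^+ 2 + B ^+ 2 <= N * M * fine (mu D).
  by rewrite sqrAB -Rintegral_cst //; apply: le_Rintegral.
have := fine_ge0 (measure_ge0 mu D); rewrite -NN.
nra.
Qed.

End speed_bound.

Section observer_motion.
Variable R : realType.

Lemma admissible_continuous_comp (psi h : R -> R) (t : R) :
  admissible psi -> continuous h -> measurable_fun `[0, t] (fun s => h (psi s)).
Proof.
move=> mpsi ch; apply: measurableT_comp.
  exact: measurable_realfun.continuous_measurable_fun.
by apply: measurable_funS mpsi => // x /=; rewrite !in_itv /= => /andP[-> _].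
Qed.

Lemma lebesgue_measure_itv0 (t : R) : 0 <= t -> lebesgue_measure `[0, t] = t%:E.
Proof.
move=> t0; rewrite lebesgue_measure_itv /= lte_fin.
have [t_gt0|] := ltP 0 t; first by rewrite -EFinD subr0.
by move=> t_le0; congr EFin; apply/eqP; rewrite eq_le t_le0 t0.
Qed.

Lemma obs_displacement_sqr_le (alpha xO yO t : R) (psi : R -> R) :
  admissible psi -> 0 <= alpha -> 0 <= t ->
  (obs_x alpha xO psi t - xO) ^+ 2 + (obs_y alpha yO psi t - yO) ^+ 2
    <= (alpha * t) ^+ 2.
Proof.
move=> mpsi alpha0 t0.
have cM (h : R -> R) : continuous h -> continuous (fun u => alpha * h u).
  move=> ch u; apply: (@continuousM _ _ (cst alpha) h); last exact: ch.
  exact: cst_continuous.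
rewrite /obs_x /obs_y !(addrC xO, addrC yO) !addrK.
have fine_t : fine (lebesgue_measure `[0, t]) = t.
  by rewrite lebesgue_measure_itv0.
apply: le_trans (Rintegral_sqr_norm_le _ _ _ _ alpha0 _) _; rewrite ?fine_t //.
- by have := ltry t; rewrite -(lebesgue_measure_itv0 t0).
- exact: admissible_continuous_comp mpsi (cM _ (@continuous_cos R)).
- exact: admissible_continuous_comp mpsi (cM _ (@continuous_sin R)).
- by move=> s _; rewrite !exprMn -mulrDr cos2Dsin2 mulr1.
Qed.

End observer_motion.

Lemma reachable_below_decision_line (R : rcfType) (alpha t u v : R) :
  0 < alpha < 1 -> 0 <= t ->
  u ^+ 2 + (t - v) ^+ 2 <= (alpha * t) ^+ 2 ->
  v <= Num.sqrt (1 - alpha ^+ 2) / alpha * `|u| ->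
  v = (1 - alpha ^+ 2) * t /\ v = Num.sqrt (1 - alpha ^+ 2) / alpha * `|u|.
Proof.
move=> /andP[alpha0 alpha1] t0 reach below.
set c := Num.sqrt (1 - alpha ^+ 2) in below *.
have c0 : 0 <= c by exact: sqrtr_ge0.
have cc : c ^+ 2 = 1 - alpha ^+ 2 by rewrite sqr_sqrtr //; nra.
have uu : `|u| ^+ 2 = u ^+ 2 by rewrite real_normK ?num_real.
have u0 := normr_ge0 u.
have alpha_v : alpha * v <= c * `|u|.
  have := ler_wpM2l (ltW alpha0) below.
  by rewrite mulrA mulrCA mulfV ?gt_eqF // mulr1.
have v0 : 0 <= v.
  have := sqr_ge0 u; have : alpha ^+ 2 <= 1 by nra.
  rewrite exprMn in reach; nra.
(* with w := t - v: (alpha v)^2 - (1 - alpha^2) (alpha^2 t^2 - w^2) = (w - alpha^2 t)^2 *)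
have sq_le0 : (t - v - alpha ^+ 2 * t) ^+ 2 <= (alpha * v) ^+ 2 - (c * `|u|) ^+ 2.
  rewrite [(c * _) ^+ 2]exprMn cc uu.
  have : (1 - alpha ^+ 2) * u ^+ 2
         <= (1 - alpha ^+ 2) * ((alpha * t) ^+ 2 - (t - v) ^+ 2).
    rewrite ler_wpM2l //; [nra | lra].
  lra.
have alpha_v0 : 0 <= alpha * v := mulr_ge0 (ltW alpha0) v0.
have alpha_vE : alpha * v = c * `|u|.
  apply/eqP; rewrite eq_le alpha_v /=.
  have := sqr_ge0 (t - v - alpha ^+ 2 * t); nra.
split.
  have : (t - v - alpha ^+ 2 * t) ^+ 2 = 0.
    by apply/eqP; rewrite eq_le sqr_ge0 andbT; move: sq_le0; rewrite alpha_vE subrr.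
  by move/eqP; rewrite sqrf_eq0 => /eqP; lra.
by rewrite mulrAC -alpha_vE mulrAC mulfV ?gt_eqF // mul1r.
Qed.

Section contact.
Variables (R : realType) (alpha r xO yO yT : R).
Hypothesis alpha01 : 0 < alpha < 1.

Lemma decision_line_graph (x : R) :
  decision_line alpha yT (x, yT + Num.sqrt (1 - alpha ^+ 2) / alpha * `|x|).
Proof.
have alpha0 : alpha != 0 by rewrite gt_eqF //; case/andP: alpha01.
exists (`|x| / alpha); split.
  by rewrite divr_ge0 ?normr_ge0 ?ltW //; case/andP: alpha01.
rewrite divfK // (mulrC (`|x| / alpha)) mulrA [_ / alpha * `|x|]mulrAC.
have [x0|x0] := leP 0 x; [left | right].
  by rewrite ger0_norm.
by rewrite ltr0_norm // opprK.
Qed.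

Lemma contact_on_decision_line (psi : R -> R) (t : R) :
  obs_disk r xO yO `<=` below_DL alpha yT -> admissible psi -> 0 <= t ->
  dist2 alpha xO yO yT psi t <= r ^+ 2 ->
  exists2 P : R * R, P \in obs_disk r xO yO `&` decision_line alpha yT
                   & P.2 = yT + (1 - alpha ^+ 2) * t.
Proof.
move=> below mpsi t0 contact.
have := obs_displacement_sqr_le xO yO mpsi (ltW (andP alpha01).1) t0.
set a := obs_x _ _ _ _ - xO; set b := obs_y _ _ _ _ - yO => reach.
have inD : obs_disk r xO yO (- a, yT + (t - b)).
  by rewrite /obs_disk /=; move: contact; rewrite /dist2 /targ_y /a /b; lra.
have := below _ inD; rewrite /below_DL /= addrC addKr => belowP.
have [] := reachable_below_decision_line alpha01 t0 (u := - a) (v := t - b) _ belowP.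
  by rewrite sqrrN (_ : t - (t - b) = b) //; ring.
move=> vE onDL; exists (- a, yT + (t - b)); last by rewrite vE.
by rewrite in_setE; split => //; rewrite onDL; exact: decision_line_graph.
Qed.

End contact.

Section single_contact.
Variables (R : realType) (alpha r xO yO yT : R) (psi : R -> R).

Definition contact_times : set R :=
  [set t | 0 <= t /\ dist2 alpha xO yO yT psi t <= r ^+ 2].

Hypothesis contact_unique :
  forall t1 t2, contact_times t1 -> contact_times t2 -> t1 = t2.

Lemma t2_single_contact (t0 : R) : contact_times t0 ->
  t2 alpha r xO yO yT psi = t0%:E.
Proof.
move=> ct0; rewrite /t2 -[RHS]ereal_inf1; congr ereal_inf.
apply/seteqP; split => x /=; last by move=> ->; exists t0.
by move=> [t ct <-]; rewrite (contact_unique ct ct0).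
Qed.

Lemma tf_single_contact (t0 : R) : contact_times t0 ->
  tf alpha r xO yO yT psi = t0%:E.
Proof.
move=> ct0; rewrite /tf (t2_single_contact ct0); apply/eqP; rewrite eq_le.
apply/andP; split; last by apply: le_ereal_inf_tmp => _ [t [] ? _ <-].
apply/lee_addgt0Pr => e e0; apply: ereal_inf_le; exists (t0 + e)%:E => //.
exists (t0 + e) => //; split; first by rewrite lee_fin lerDl ltW.
rewrite ltNge; apply/negP => later; have [t00 _] := ct0.
have := contact_unique (conj (addr_ge0 t00 (ltW e0)) later) ct0; lra.
Qed.

Lemma tobs_single_contact : tobs alpha r xO yO yT psi = 0%E.
Proof.
rewrite /tobs; case: ifPn => // t2_fin.
have [[t0 ct0]|no_contact] := pselect (exists t0, contact_times t0).
  by rewrite (tf_single_contact ct0) (t2_single_contact ct0) subee.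
move: t2_fin; rewrite /t2 (_ : EFin @` contact_times = set0) ?ereal_inf0 ?eqxx //.
by apply/seteqP; split => // x [t ct _]; apply: no_contact; exists t.
Qed.

End single_contact.

Lemma contact_times_unique (R : realType) (alpha r xO yO yT : R) (psi : R -> R) :
  0 < alpha < 1 -> obs_disk r xO yO `<=` below_DL alpha yT ->
  (forall p q : R * R,
     p \in obs_disk r xO yO `&` decision_line alpha yT ->
     q \in obs_disk r xO yO `&` decision_line alpha yT -> p = q) ->
  admissible psi ->
  forall t1 t2, contact_times alpha r xO yO yT psi t1 ->
                contact_times alpha r xO yO yT psi t2 -> t1 = t2.
Proof.
move=> alpha01 below DL_uniq mpsi t1 t2 [t10 ct1] [t20 ct2].
have [P1 P1DL P1E] := contact_on_decision_line alpha01 below mpsi t10 ct1.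
have [P2 P2DL P2E] := contact_on_decision_line alpha01 below mpsi t20 ct2.
have : (1 - alpha ^+ 2) * t1 = (1 - alpha ^+ 2) * t2.
  by apply: (addrI yT); rewrite -P1E -P2E (DL_uniq _ _ P1DL P2DL).
apply: mulfI; rewrite subr_eq0 eq_sym; case/andP: alpha01 => alpha0 alpha1.
by rewrite lt_eqF // expr_lt1 // ltW.
Qed.

Theorem lemma8 (R : realType) (alpha r xO yO yT : R) :
  0 < alpha < 1 -> 0 < r ->
  obs_disk r xO yO `<=` below_DL alpha yT ->
  (forall p q : R * R,
     p \in obs_disk r xO yO `&` decision_line alpha yT ->
     q \in obs_disk r xO yO `&` decision_line alpha yT -> p = q) ->
  optimal_obs_time alpha r xO yO yT = 0%E.
Proof.
move=> alpha01 _ below DL_uniq.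
have tobs0 psi : admissible psi -> tobs alpha r xO yO yT psi = 0%E.
  move=> mpsi; apply: tobs_single_contact.
  exact: contact_times_unique alpha01 below DL_uniq mpsi.
rewrite /optimal_obs_time (_ : [set tobs _ _ _ _ _ psi | psi in _] = [set 0%E]).
  exact: ereal_sup1.
apply/seteqP; split => [_ [psi mpsi <-]|_ ->]; first exact: tobs0.
by exists (fun=> 0); [exact: measurable_cst | exact/tobs0/measurable_cst].
Qed.
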